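(* Let $H,H'$ be heaps, $a$ an address, $R$ a register file, $v$ a value and $\tau$ an ownership well-formed type. If $H\approx_a H'$, $\mathrm{own}(H,v,\tau)(a)=0$ and $\mathrm{SATv}(H,R,v,\tau)$, then $\mathrm{SATv}(H',R,v,\tau)$.
   Context: Refinement formulas are first-order formulas over integer variables, literals, a value variable $\nu$, atomic predicates of a fixed theory and context-prefix predicates; $\models\psi$ means validity. Types $\tau ::= \{\nu:\mathtt{int}\mid\varphi\}\mid\tau\ \mathtt{ref}^r$, $r\in[0,1]$ rational. $\top_0=\{\nu:\mathtt{int}\mid\top\}$, $\top_i=\top_{i-1}\ \mathtt{ref}^0$; a type is ownership well-formed if every subterm $\tau'\ \mathtt{ref}^0$ has $\tau'=\top_n$ for some $n$ (the paper imposes this on all types). Values: integers or addresses; heap: finite partial map addresses $\to$ values; register file: finite partial map variables $\to$ values. $[R]\varphi$: $[\emptyset]\varphi=\varphi$, $[R\{x\mapsto n\}]\varphi=[R][n/x]\varphi$ ($n$ integer), $[R\{x\mapsto a\}]\varphi=[R]\varphi$ ($a$ address). $\mathrm{SATv}(H,R,v,\tau)$: for $\tau=\{\nu:\mathtt{int}\mid\varphi\}$, $v\in\mathbb Z$ and $\models[R][v/\nu]\varphi$; for $\tau=\tau'\ \mathtt{ref}^r$, $v$ is an address $a\in dom(H)$ and $\mathrm{SATv}(H,R,H(a),\tau')$. $H\vdash v\Downarrow n$ is the smallest relation with: $v\in\mathbb Z$ implies $H\vdash v\Downarrow0$; if $H\vdash v\Downarrow n$ and $H(a)=v$ then $H\vdash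 a\Downarrow n+1$. $H\approx_a H'$ iff $dom(H)=dom(H')$, $H(a')=H'(a')$ for all $a'\in dom(H)$ with $a'\neq a$, and for all $n$, $H\vdash a\Downarrow n$ iff $H'\vdash a\Downarrow n$. Ownership maps: functions addresses $\to$ nonnegative rationals added pointwise, $\{a\mapsto r\}$ maps $a$ to $r$ and all else to 0, $\emptyset$ zero map; $\mathrm{own}(H,v,\tau)=\{a\mapsto r\}+\mathrm{own}(H,H(a),\tau')$ if $v=a\in dom(H)$ and $\tau=\tau'\ \mathtt{ref}^r$, otherwise $\emptyset$. *)

From mathcomp Require Import all_boot all_order all_algebra.
Set Implicit Arguments. Unset Strict Implicit. Unset Printing Implicit Defensive.
Import Order.TTheory GRing.Theory Num.Theory.
Local Open Scope ring_scope.

(** Variables: [None] is the value variable nu, [Some i] are program variables. *)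
Definition var := option nat.
Definition nu : var := None.

Inductive term : Type :=
| TVar of var
| TLit of int.

(** Atomic predicates (of the
    fixed theory, and context-prefix predicates) are given by their
    interpretation as predicates on integer argument lists. *)
Inductive formula : Type :=
| FTrue
| FFalse
| FAtom of (seq int -> Prop) & seq term
| FNot of formula
| FAnd of formula & formula
| FOr of formula & formula
| FImp of formula & formula
| FAll of var & formula
| FEx of var & formula.

Definition subst_term (n : int) (x : var) (t : term) : term :=
  match t with
  | TVar y => if y == x then TLit n else t
  | TLit _ => t
  end.

Fixpoint subst (n : int) (x : var) (f : formula) : formula :=
  match f with
  | FTrue => FTrue
  | FFalse => FFalse
  | FAtom p ts => FAtom p (map (subst_term n x) ts)
  | FNot g => FNot (subst n x g)
  | FAnd g h => FAnd (subst n x g) (subst n x h)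
  | FOr g h => FOr (subst n x g) (subst n x h)
  | FImp g h => FImp (subst n x g) (subst n x h)
  | FAll y g => if y == x then f else FAll y (subst n x g)
  | FEx y g => if y == x then f else FEx y (subst n x g)
  end.

Definition env := var -> int.
Definition upd (e : env) (x : var) (n : int) : env :=
  fun y => if y == x then n else e y.

Definition eval_term (e : env) (t : term) : int :=
  match t with TVar y => e y | TLit n => n end.

Fixpoint eval (e : env) (f : formula) : Prop :=
  match f with
  | FTrue => True
  | FFalse => False
  | FAtom p ts => p (map (eval_term e) ts)
  | FNot g => ~ eval e g
  | FAnd g h => eval e g /\ eval e h
  | FOr g h => eval e g \/ eval e h
  | FImp g h => eval e g -> eval e h
  | FAll y g => forall n, eval (upd e y n) g
  | FEx y g => exists n, eval (upd e y n) g
  end.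

Definition valid (f : formula) : Prop := forall e, eval e f.

Definition addr := nat.
Inductive value : Type :=
| VInt of int
| VAddr of addr.

Definition heap := addr -> option value.
Definition finite_heap (H : heap) : Prop :=
  exists l : seq addr, forall a, H a <> None -> a \in l.

(** Register files: finite partial maps, represented as lists of bindings
    (most recent binding first) with pairwise distinct variables. *)
Definition regfile := seq (var * value).
Definition regfile_wf (R : regfile) : Prop := uniq (map fst R).

Fixpoint apply_reg (R : regfile) (f : formula) : formula :=
  match R with
  | [::] => f
  | (x, VInt n) :: R' => apply_reg R' (subst n x f)
  | (_, VAddr _) :: R' => apply_reg R' f
  end.

Inductive ty : Type :=
| TRefine of formula        (* {nu : int | phi} *)
| TRef of ty & rat.

Fixpoint ty_wf (t : ty) : Prop :=
  match t with
  | TRefine _ => True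
  | TRef t' r => (0 <= r <= 1) /\ ty_wf t'
  end.

Fixpoint top (n : nat) : ty :=
  match n with
  | 0%N => TRefine FTrue
  | n'.+1 => TRef (top n') 0
  end.

Fixpoint own_wf (t : ty) : Prop :=
  match t with
  | TRefine _ => True
  | TRef t' r => (r = 0 -> exists n, t' = top n) /\ own_wf t'
  end.

Fixpoint SATv (H : heap) (R : regfile) (v : value) (t : ty) : Prop :=
  match t with
  | TRefine f =>
      match v with
      | VInt n => valid (apply_reg R (subst n nu f))
      | VAddr _ => False
      end
  | TRef t' _ =>
      match v with
      | VAddr a => match H a with Some w => SATv H R w t' | None => False end
      | VInt _ => False
      end
  end.

Inductive reaches (H : heap) : value -> nat -> Prop :=
| reaches_int z : reaches H (VInt z) 0
| reaches_addr a v n : reaches H v n -> H a = Some v -> reaches H (VAddr a) n.+1.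

Definition heap_approx (H H' : heap) (a : addr) : Prop :=
  (forall a', H a' = None <-> H' a' = None) /\
  (forall a', H a' <> None -> a' <> a -> H a' = H' a') /\
  (forall n, reaches H (VAddr a) n <-> reaches H' (VAddr a) n).

Definition ownmap := addr -> rat.

Fixpoint own (H : heap) (v : value) (t : ty) : ownmap :=
  match t, v with
  | TRef t' r, VAddr a =>
      match H a with
      | Some w => fun b => (if b == a then r else 0) + own H w t' b
      | None => fun _ => 0
      end
  | _, _ => fun _ => 0
  end.

From mathcomp Require Import all_boot all_order all_algebra.
Set Implicit Arguments. Unset Strict Implicit. Unset Printing Implicit Defensive.
Local Open Scope ring_scope.
Import Order.TTheory GRing.Theory Num.Theory.

(* Away from [a] the two heaps agree, so nothing
   changes.  If the chain of references reaches [a], the zero-ownership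
   hypothesis forces the reference type there to be [ref^0], hence by
   ownership well-formedness of the form [top n]; satisfying [top n] only says
   that [n] dereferences lead to an integer, and this is exactly what
   [H ≈_a H'] preserves at [a]. *)

Lemma apply_reg_true (R : regfile) : apply_reg R FTrue = FTrue.
Proof. by elim: R => [|[x [n|b]] R IH]. Qed.

Lemma SATv_top (H : heap) (R : regfile) (n : nat) (v : value) :
  SATv H R v (top n) <-> reaches H v n.
Proof.
elim: n v => [|n IH] [z|b] /=; try by split=> // hr; inversion hr.
- by rewrite apply_reg_true; split=> _ //; constructor.
- split=> [|hr].
  + by case Hb: (H b) => [w|] // /IH hw; apply: reaches_addr hw Hb.
  + by inversion hr as [|b' w n' hw Hb]; subst; rewrite Hb; apply/IH.
Qed.

Lemma own_ge0 (H : heap) (t : ty) (v : value) (b : addr) :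
  ty_wf t -> 0 <= own H v t b.
Proof.
elim: t v => [f|t IH r] [z|c] //= [/andP [r_ge0 _] wf_t].
case: (H c) => // w; apply: addr_ge0; last exact: IH.
by case: ifP.
Qed.

Lemma own_ref_eq0 (H : heap) (t : ty) (r : rat) (b c : addr) (w : value) :
  ty_wf t -> 0 <= r -> H b = Some w ->
  own H (VAddr b) (TRef t r) c = 0 -> (c = b -> r = 0) /\ own H w t c = 0.
Proof.
move=> wf_t r_ge0 Hb /=; rewrite Hb => /eqP.
rewrite paddr_eq0 ?own_ge0 //; last by case: ifP.
by case: ifP => [/eqP -> /andP [/eqP -> /eqP ->] | /eqP c_neq_b /andP [_ /eqP ->]].
Qed.

Lemma SATv_top_heap_approx (H H' : heap) (a : addr) (R : regfile) (n : nat) :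
  heap_approx H H' a ->
  SATv H R (VAddr a) (top n) -> SATv H' R (VAddr a) (top n).
Proof. by move=> [_ [_ reach_a]] /SATv_top/reach_a/SATv_top. Qed.

Lemma SATv_heap_approx (H H' : heap) (a : addr) (R : regfile) (t : ty) (v : value) :
  ty_wf t -> own_wf t -> heap_approx H H' a ->
  own H v t a = 0 -> SATv H R v t -> SATv H' R v t.
Proof.
move=> + + approx; elim: t v => [f|t IH r] [z|b] //.
move=> [/andP [r_ge0 _] wf_t] [ref0_top owf_t] own_a /=.
case Hb: (H b) => [w|] // sat_w.
have [r_eq0 own_w] := own_ref_eq0 wf_t r_ge0 Hb own_a.
have [a_eq_b|b_neq_a] := eqVneq a b.
- have [n t_top] := ref0_top (r_eq0 a_eq_b); subst t b.
  have : SATv H R (VAddr a) (top n.+1) by rewrite /= Hb.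
  by move/(SATv_top_heap_approx approx).
- have [_ [agree _]] := approx.
  rewrite -agree ?Hb //; last by apply/eqP; rewrite eq_sym.
  exact: IH.
Qed.

Theorem lemma22 (H H' : heap) (a : addr) (R : regfile) (v : value) (t : ty) :
  finite_heap H -> finite_heap H' -> regfile_wf R ->
  ty_wf t -> own_wf t ->
  heap_approx H H' a -> own H v t a = 0 -> SATv H R v t -> SATv H' R v t.
Proof. by move=> _ _ _; apply: SATv_heap_approx. Qed.
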